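(* If $t_1$ and $t_2$ are connected CCSK$^{\mathrm P}$ transitions (resp. connected CCSK transitions), then exactly one of $t_1\mathrel{\iota}t_2$ and $t_1\otimes t_2$ holds.
   Context: Names $\mathsf N$ with a bijection $\overline{\cdot}$ onto disjoint co-names; labels $\mathsf L=\mathsf N\cup\overline{\mathsf N}\cup\{\tau\}$ ($\alpha$ over $\mathsf L$, $\lambda$ over $\mathsf L\setminus\{\tau\}$, $\overline\tau=\tau$); $\mathsf K$ a denumerable set of keys. CCSK processes: $X,Y::=\mathbf 0\mid\alpha.X\mid X\backslash\lambda\mid X+Y\mid X|Y\mid\alpha[k].X$; $\mathrm{keys}(X)$ = keys occurring in $X$; standard means $\mathrm{keys}(X)=\emptyset$. Directions $D\in\{\mathrm L,\mathrm R\}$, $\bar{\mathrm L}=\mathrm R$, $\bar{\mathrm R}=\mathrm L$. Proof keyed labels: $\theta::=\upsilon\alpha[k]\mid\upsilon\langle\upsilon_1\lambda[k],\upsilon_2\overline\lambda[k]\rangle$, $\upsilon,\upsilon_i\in\{|_{\mathrm L},|_{\mathrm R},+_{\mathrm L},+_{\mathrm R}\}^*$; $\ell(\upsilon\alpha[k])=\alpha$, $\ell(\upsilon\langle\cdots\rangle)=\tau$, $\mathrm{key}(\theta)=k$. Forward CCSK$^{\mathrm P}$ transitions $X\xrightarrow\theta X'$: least relation closed under (act) $\alpha.X\xrightarrow{\alpha[k]}\alpha[k].X$ if $\mathrm{keys}(X)=\emptyset$; (pre) $X\xrightarrow\theta X'$, $\mathrm{key}(\theta)\neq k$ $\Rightarrow$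 $\alpha[k].X\xrightarrow\theta\alpha[k].X'$; (res) $X\xrightarrow\theta X'$, $\ell(\theta)\notin\{\lambda,\overline\lambda\}$ $\Rightarrow$ $X\backslash\lambda\xrightarrow\theta X'\backslash\lambda$; (par) $X\xrightarrow\theta X'$, $\mathrm{key}(\theta)\notin\mathrm{keys}(Y)$ $\Rightarrow$ $X|Y\xrightarrow{|_{\mathrm L}\theta}X'|Y$ and $Y|X\xrightarrow{|_{\mathrm R}\theta}Y|X'$; (syn) $X\xrightarrow{\upsilon_1\lambda[k]}X'$, $Y\xrightarrow{\upsilon_2\overline\lambda[k]}Y'$ $\Rightarrow$ $X|Y\xrightarrow{\langle\upsilon_1\lambda[k],\upsilon_2\overline\lambda[k]\rangle}X'|Y'$; (sum) $X\xrightarrow\theta X'$, $\mathrm{keys}(Y)=\emptyset$ $\Rightarrow$ $X+Y\xrightarrow{+_{\mathrm L}\theta}X'+Y$ and $Y+X\xrightarrow{+_{\mathrm R}\theta}Y+X'$. Backward transitions are the converse of forward ones (same label). Paths are sequences of composable (forward or backward) transitions; only processes reachable by a path from a standard process are considered. Transitions are connected if there is a path from the source of one to the target of the other. CCSK has the same processes and, for each CCSK$^{\mathrm P}$ transition with label $\theta$, a transition between the same processes with label $\ell(\theta)[\mathrm{key}(\theta)]$; this is a bijection between transitions, and $\hat t$ denotes the CCSK$^{\mathrm P}$ transition corresponding to a CCSK transition $t$. Relations on proof labels (least closed under the rules; ''prefix'' = form $\beta[k']$; $\theta_{\mathrm L},\theta_{\mathrm R}$ components of a synchronisation label): Connectivity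 $\frown$: (A1) $\alpha[k]\frown\theta$; (A2) $\theta\frown\alpha[k]$ if $\theta$ not a prefix; (P1) $|_D\theta\frown|_D\theta'$ if $\theta\frown\theta'$; (P2) $|_D\theta\frown|_{\bar D}\theta'$; (C1) $+_D\theta\frown+_D\theta'$ if $\theta\frown\theta'$; (C2) $+_D\theta\frown+_{\bar D}\theta'$; (S1) $|_D\theta\frown\langle\theta_{\mathrm L},\theta_{\mathrm R}\rangle$ if $\theta\frown\theta_D$; (S2) $\langle\theta_{\mathrm L},\theta_{\mathrm R}\rangle\frown|_D\theta$ if $\theta_D\frown\theta$; (S3) $\langle\theta_1,\theta_2\rangle\frown\langle\theta_1',\theta_2'\rangle$ if $\theta_1\frown\theta_1'$, $\theta_2\frown\theta_2'$. Dependence $\otimes$: A1, A2, C1, C2, P1, S1, S2 with $\otimes$ in place of $\frown$; (P2$_k$) $|_D\theta\otimes|_{\bar D}\theta'$ if $\mathrm{key}(\theta)=\mathrm{key}(\theta')$; (S3) $\langle\theta_1,\theta_2\rangle\otimes\langle\theta_1',\theta_2'\rangle$ if for some $i\ne j$, $\theta_i\otimes\theta_i'$ and $\theta_j\frown\theta_j'$. Independence $\iota$: C1, P1, S1, S2, S3 with $\iota$ in place of $\frown$, plus (P2$_k$) $|_D\theta\mathrel\iota|_{\bar D}\theta'$ if $\mathrm{key}(\theta)\ne\mathrm{key}(\theta')$. On CCSK$^{\mathrm P}$ transitions: $t_1\mathrel\iota t_2$ iff $t_1,t_2$ are connected and their labels satisfy $\iota$; likewise for $\otimes$. On CCSK transitions: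 $t_1\mathrel\iota t_2$ iff $t_1,t_2$ are connected and the labels of $\hat t_1,\hat t_2$ satisfy $\iota$; likewise for $\otimes$. *)

From Stdlib Require Import List.
Import ListNotations.
Set Implicit Arguments.

Section CCSK.

Variable N : Type.
Definition key := nat.

Inductive vis : Type := VName (a : N) | VCo (a : N).
Definition vbar (l : vis) : vis :=
  match l with VName a => VCo a | VCo a => VName a end.

Inductive label : Type := Vis (l : vis) | Tau.
Definition lbar (a : label) : label :=
  match a with Vis l => Vis (vbar l) | Tau => Tau end.

Inductive proc : Type :=
| PNil : proc
| PPre : label -> proc -> proc
| PRes : proc -> vis -> proc
| PSum : proc -> proc -> proc
| PPar : proc -> proc -> proc
| PKeyed : label -> key -> proc -> proc.

Fixpoint keys (X : proc) : list key :=
  match X with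
  | PNil => []
  | PPre _ X => keys X
  | PRes X _ => keys X
  | PSum X Y => keys X ++ keys Y
  | PPar X Y => keys X ++ keys Y
  | PKeyed _ k X => k :: keys X
  end.

Definition standard (X : proc) : Prop := keys X = [].

Inductive dir : Type := DL | DR.
Definition dbar (D : dir) : dir := match D with DL => DR | DR => DL end.

Inductive op : Type := OPar (D : dir) | OSum (D : dir).

(* Proof keyed labels:
   theta ::= upsilon alpha[k] | upsilon <upsilon1 lambda[k], upsilon2 lambdabar[k]> *)
Inductive plabel : Type :=
| LAct : list op -> label -> key -> plabel
| LSyn : list op -> list op -> vis -> list op -> key -> plabel.

Definition pre (o : op) (t : plabel) : plabel :=
  match t with
  | LAct u a k => LAct (o :: u) a k
  | LSyn u u1 l u2 k => LSyn (o :: u) u1 l u2 k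
  end.

Definition ell (t : plabel) : label :=
  match t with LAct _ a _ => a | LSyn _ _ _ _ _ => Tau end.

Definition keyof (t : plabel) : key :=
  match t with LAct _ _ k => k | LSyn _ _ _ _ k => k end.

Definition comp (D : dir) (u1 : list op) (l : vis) (u2 : list op) (k : key) : plabel :=
  match D with
  | DL => LAct u1 (Vis l) k
  | DR => LAct u2 (Vis (vbar l)) k
  end.

Definition is_prefix (t : plabel) : Prop := exists b k, t = LAct [] b k.

Inductive step : proc -> plabel -> proc -> Prop :=
| st_act : forall a X k, keys X = [] ->
    step (PPre a X) (LAct [] a k) (PKeyed a k X)
| st_pre : forall a k X t X', step X t X' -> keyof t <> k ->
    step (PKeyed a k X) t (PKeyed a k X')
| st_res : forall X t X' l, step X t X' ->
    ell t <> Vis l -> ell t <> Vis (vbar l) ->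
    step (PRes X l) t (PRes X' l)
| st_parL : forall X t X' Y, step X t X' -> ~ In (keyof t) (keys Y) ->
    step (PPar X Y) (pre (OPar DL) t) (PPar X' Y)
| st_parR : forall X t X' Y, step X t X' -> ~ In (keyof t) (keys Y) ->
    step (PPar Y X) (pre (OPar DR) t) (PPar Y X')
| st_syn : forall X X' Y Y' u1 u2 l k,
    step X (LAct u1 (Vis l) k) X' ->
    step Y (LAct u2 (Vis (vbar l)) k) Y' ->
    step (PPar X Y) (LSyn [] u1 l u2 k) (PPar X' Y')
| st_sumL : forall X t X' Y, step X t X' -> keys Y = [] ->
    step (PSum X Y) (pre (OSum DL) t) (PSum X' Y)
| st_sumR : forall X t X' Y, step X t X' -> keys Y = [] ->
    step (PSum Y X) (pre (OSum DR) t) (PSum Y X').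

Inductive path : proc -> proc -> Prop :=
| path_nil : forall X, path X X
| path_fw : forall X t Y Z, step X t Y -> path Y Z -> path X Z
| path_bw : forall X t Y Z, step Y t X -> path Y Z -> path X Z.

Definition reachable (X : proc) : Prop := exists S, standard S /\ path S X.

Record ptrans : Type := PT { psrc : proc; plab : plabel; ptgt : proc }.
Definition is_ptrans (t : ptrans) : Prop := step (psrc t) (plab t) (ptgt t).

Definition pconnected (t1 t2 : ptrans) : Prop :=
  path (psrc t1) (ptgt t2) \/ path (psrc t2) (ptgt t1).

Inductive conn : plabel -> plabel -> Prop :=
| cA1 : forall a k t, conn (LAct [] a k) t
| cA2 : forall t a k, ~ is_prefix t -> conn t (LAct [] a k)
| cP1 : forall D t t', conn t t' -> conn (pre (OPar D) t) (pre (OPar D) t')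
| cP2 : forall D t t', conn (pre (OPar D) t) (pre (OPar (dbar D)) t')
| cC1 : forall D t t', conn t t' -> conn (pre (OSum D) t) (pre (OSum D) t')
| cC2 : forall D t t', conn (pre (OSum D) t) (pre (OSum (dbar D)) t')
| cS1 : forall D t u1 l u2 k, conn t (comp D u1 l u2 k) ->
    conn (pre (OPar D) t) (LSyn [] u1 l u2 k)
| cS2 : forall D t u1 l u2 k, conn (comp D u1 l u2 k) t ->
    conn (LSyn [] u1 l u2 k) (pre (OPar D) t)
| cS3 : forall u1 l u2 k u1' l' u2' k',
    conn (comp DL u1 l u2 k) (comp DL u1' l' u2' k') ->
    conn (comp DR u1 l u2 k) (comp DR u1' l' u2' k') ->
    conn (LSyn [] u1 l u2 k) (LSyn [] u1' l' u2' k').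

Inductive dep : plabel -> plabel -> Prop :=
| dA1 : forall a k t, dep (LAct [] a k) t
| dA2 : forall t a k, ~ is_prefix t -> dep t (LAct [] a k)
| dP1 : forall D t t', dep t t' -> dep (pre (OPar D) t) (pre (OPar D) t')
| dP2k : forall D t t', keyof t = keyof t' ->
    dep (pre (OPar D) t) (pre (OPar (dbar D)) t')
| dC1 : forall D t t', dep t t' -> dep (pre (OSum D) t) (pre (OSum D) t')
| dC2 : forall D t t', dep (pre (OSum D) t) (pre (OSum (dbar D)) t')
| dS1 : forall D t u1 l u2 k, dep t (comp D u1 l u2 k) ->
    dep (pre (OPar D) t) (LSyn [] u1 l u2 k)
| dS2 : forall D t u1 l u2 k, dep (comp D u1 l u2 k) t ->
    dep (LSyn [] u1 l u2 k) (pre (OPar D) t)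
| dS3 : forall i j u1 l u2 k u1' l' u2' k', i <> j ->
    dep (comp i u1 l u2 k) (comp i u1' l' u2' k') ->
    conn (comp j u1 l u2 k) (comp j u1' l' u2' k') ->
    dep (LSyn [] u1 l u2 k) (LSyn [] u1' l' u2' k').

Inductive ind : plabel -> plabel -> Prop :=
| iP1 : forall D t t', ind t t' -> ind (pre (OPar D) t) (pre (OPar D) t')
| iP2k : forall D t t', keyof t <> keyof t' ->
    ind (pre (OPar D) t) (pre (OPar (dbar D)) t')
| iC1 : forall D t t', ind t t' -> ind (pre (OSum D) t) (pre (OSum D) t')
| iS1 : forall D t u1 l u2 k, ind t (comp D u1 l u2 k) ->
    ind (pre (OPar D) t) (LSyn [] u1 l u2 k)
| iS2 : forall D t u1 l u2 k, ind (comp D u1 l u2 k) t ->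
    ind (LSyn [] u1 l u2 k) (pre (OPar D) t)
| iS3 : forall u1 l u2 k u1' l' u2' k',
    ind (comp DL u1 l u2 k) (comp DL u1' l' u2' k') ->
    ind (comp DR u1 l u2 k) (comp DR u1' l' u2' k') ->
    ind (LSyn [] u1 l u2 k) (LSyn [] u1' l' u2' k').

Definition ptrans_ind (t1 t2 : ptrans) : Prop :=
  pconnected t1 t2 /\ ind (plab t1) (plab t2).
Definition ptrans_dep (t1 t2 : ptrans) : Prop :=
  pconnected t1 t2 /\ dep (plab t1) (plab t2).

(* CCSK: same processes; a transition labelled l(theta)[key(theta)]
   for each CCSK^P transition labelled theta. *)
Definition cstep (X : proc) (a : label) (k : key) (X' : proc) : Prop :=
  exists t, step X t X' /\ ell t = a /\ keyof t = k.

Inductive cpath : proc -> proc -> Prop :=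
| cpath_nil : forall X, cpath X X
| cpath_fw : forall X a k Y Z, cstep X a k Y -> cpath Y Z -> cpath X Z
| cpath_bw : forall X a k Y Z, cstep Y a k X -> cpath Y Z -> cpath X Z.

Definition creachable (X : proc) : Prop := exists S, standard S /\ cpath S X.

Record ctrans : Type := CT { csrc : proc; clab : label; ckey : key; ctgt : proc }.
Definition is_ctrans (t : ctrans) : Prop := cstep (csrc t) (clab t) (ckey t) (ctgt t).

Definition cconnected (t1 t2 : ctrans) : Prop :=
  cpath (csrc t1) (ctgt t2) \/ cpath (csrc t2) (ctgt t1).

(* hat t = the CCSK^P transition corresponding to the CCSK transition t
   (unique, since the correspondence is a bijection). *)
Definition is_hat (t : ctrans) (th : ptrans) : Prop :=
  is_ptrans th /\ psrc th = csrc t /\ ptgt th = ctgt t /\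
  ell (plab th) = clab t /\ keyof (plab th) = ckey t.

Definition ctrans_ind (t1 t2 : ctrans) : Prop :=
  cconnected t1 t2 /\
  exists h1 h2, is_hat t1 h1 /\ is_hat t2 h2 /\ ind (plab h1) (plab h2).
Definition ctrans_dep (t1 t2 : ctrans) : Prop :=
  cconnected t1 t2 /\
  exists h1 h2, is_hat t1 h1 /\ is_hat t2 h2 /\ dep (plab h1) (plab h2).

End CCSK.

(* Forward and backward steps only add or remove keys, so connected
   transitions start from processes with the same underlying standard
   process [orig].  Two transitions of processes sharing that skeleton are
   derived by rules applied to the same syntax tree, and a simultaneous
   induction on both derivations shows that their proof labels are related
   by [ind] or by [dep]: the only real choice arises for the two sides of a
   parallel composition, where equality of keys decides, and two
   synchronisations combine the verdicts on their components.  An induction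
   on [ind] shows that the two relations are disjoint.  For CCSK it remains
   to see that a step determines its proof label, which holds because no
   step leaves a process unchanged. *)

From Stdlib Require Import List PeanoNat Lia.
Import ListNotations.
Set Implicit Arguments.

Section Labels.
Variable N : Type.
Implicit Types t : plabel N.

Lemma dbar_neq {D} : dbar D <> D.
Proof. now destruct D. Qed.

Lemma pre_inj o o' t t' : pre o t = pre o' t' -> o = o' /\ t = t'.
Proof. destruct t, t'; simpl; intro E; inversion E; subst; auto. Qed.

Lemma pre_neq_act {o t a k} : pre o t <> LAct [] a k.
Proof. now destruct t. Qed.

Lemma pre_neq_syn {o t u1 l u2 k} : pre o t <> LSyn [] u1 l u2 k.
Proof. now destruct t. Qed.

Lemma ind_conn t t' : ind t t' -> conn t t'.
Proof. induction 1; constructor; auto. Qed.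

Lemma dep_conn t t' : dep t t' -> conn t t'.
Proof.
  induction 1; try (constructor; auto; fail).
  destruct i, j; try congruence; constructor; auto.
Qed.

Ltac simplify_label_eqs :=
  repeat match goal with
  | H : pre _ _ = pre _ _ |- _ => apply pre_inj in H; destruct H
  | H : pre _ _ = LAct [] _ _ |- _ => exfalso; exact (pre_neq_act H)
  | H : LAct [] _ _ = pre _ _ |- _ => exfalso; exact (pre_neq_act (eq_sym H))
  | H : pre _ _ = LSyn [] _ _ _ _ |- _ => exfalso; exact (pre_neq_syn H)
  | H : LSyn [] _ _ _ _ = pre _ _ |- _ => exfalso; exact (pre_neq_syn (eq_sym H))
  | H : OPar _ = OPar _ |- _ => injection H; clear H; intro
  | H : OSum _ = OSum _ |- _ => injection H; clear H; intro
  | H : OPar _ = OSum _ |- _ => discriminate H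
  | H : OSum _ = OPar _ |- _ => discriminate H
  | H : ?D = dbar ?D |- _ => exfalso; exact (dbar_neq (eq_sym H))
  | H : dbar ?D = ?D |- _ => exfalso; exact (dbar_neq H)
  | |- _ => progress subst
  end.

Lemma ind_not_dep {t t'} : ind t t' -> ~ dep t t'.
Proof.
  induction 1; intro Hdep; inversion Hdep; subst; simplify_label_eqs; eauto.
  destruct i; eauto.
Qed.

Definition comparable t t' := ind t t' \/ dep t t'.

Lemma comparable_xor t t' : comparable t t' ->
  (ind t t' /\ ~ dep t t') \/ (dep t t' /\ ~ ind t t').
Proof.
  intros [Hind | Hdep].
  - left; exact (conj Hind (ind_not_dep Hind)).
  - right; split; [exact Hdep | intro Hind; exact (ind_not_dep Hind Hdep)].
Qed.

Lemma comparable_act_l a k t : comparable (LAct [] a k) t.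
Proof. right; apply dA1. Qed.

Lemma comparable_act_r t a k : comparable t (LAct [] a k).
Proof.
  right; destruct t as [[|o u] b k' | u u1 l u2 k']; try apply dA1;
    apply dA2; intros [? [? E]]; discriminate E.
Qed.

Lemma comparable_par D t t' :
  comparable t t' -> comparable (pre (OPar D) t) (pre (OPar D) t').
Proof. intros [Hind | Hdep]; [left | right]; constructor; auto. Qed.

Lemma comparable_par_opp D t t' :
  comparable (pre (OPar D) t) (pre (OPar (dbar D)) t').
Proof.
  destruct (Nat.eq_dec (keyof t) (keyof t')); [right | left]; constructor; auto.
Qed.

Lemma comparable_sum D t t' :
  comparable t t' -> comparable (pre (OSum D) t) (pre (OSum D) t').
Proof. intros [Hind | Hdep]; [left | right]; constructor; auto. Qed.

Lemma comparable_sum_opp D t t' :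
  comparable (pre (OSum D) t) (pre (OSum (dbar D)) t').
Proof. right; constructor. Qed.

Lemma comparable_par_syn D t u1 l u2 k :
  comparable t (comp D u1 l u2 k) ->
  comparable (pre (OPar D) t) (LSyn [] u1 l u2 k).
Proof. intros [Hind | Hdep]; [left | right]; constructor; auto. Qed.

Lemma comparable_syn_par D t u1 l u2 k :
  comparable (comp D u1 l u2 k) t ->
  comparable (LSyn [] u1 l u2 k) (pre (OPar D) t).
Proof. intros [Hind | Hdep]; [left | right]; constructor; auto. Qed.

Lemma comparable_syn u1 l u2 k u1' l' u2' k' :
  comparable (comp DL u1 l u2 k) (comp DL u1' l' u2' k') ->
  comparable (comp DR u1 l u2 k) (comp DR u1' l' u2' k') ->
  comparable (LSyn [] u1 l u2 k) (LSyn [] u1' l' u2' k').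
Proof.
  intros [HindL | HdepL] [HindR | HdepR].
  - left; constructor; auto.
  - right; apply (dS3 (i := DR) (j := DL)); auto using ind_conn; discriminate.
  - right; apply (dS3 (i := DL) (j := DR)); auto using ind_conn; discriminate.
  - right; apply (dS3 (i := DL) (j := DR)); auto using dep_conn; discriminate.
Qed.

End Labels.

Section Steps.
Variable N : Type.
Implicit Types X Y : proc N.

Fixpoint orig X : proc N :=
  match X with
  | PNil _ => PNil N
  | PPre a X => PPre a (orig X)
  | PRes X l => PRes (orig X) l
  | PSum X Y => PSum (orig X) (orig Y)
  | PPar X Y => PPar (orig X) (orig Y)
  | PKeyed a k X => PPre a (orig X)
  end.

Lemma step_orig X t Y : step X t Y -> orig X = orig Y.
Proof. induction 1; simpl; congruence. Qed.

Lemma path_orig X Y : path X Y -> orig X = orig Y.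
Proof.
  induction 1 as [| ? ? ? ? Hstep _ IH | ? ? ? ? Hstep _ IH]; auto;
    apply step_orig in Hstep; congruence.
Qed.

Lemma step_comparable X t X' Y t' Y' :
  step X t X' -> step Y t' Y' -> orig X = orig Y -> comparable t t'.
Proof.
  intros Hstep; revert Y t' Y'.
  induction Hstep; intros Y0 t0 Y0' Hstep0 Horig;
    [apply comparable_act_l |..];
    destruct Hstep0; simpl in Horig; try discriminate;
    injection Horig; intros; subst;
    try apply comparable_act_r;
    eauto using comparable_par, comparable_par_opp, comparable_sum,
      comparable_sum_opp, comparable_syn.
  - apply (comparable_par_syn DL); eauto.
  - apply (comparable_par_syn DR); eauto.
  - apply (comparable_syn_par DL); eauto.
  - apply (comparable_syn_par DR); eauto.
Qed.

Lemma step_keys_lt X t Y : step X t Y -> length (keys X) < length (keys Y).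
Proof.
  induction 1; simpl; rewrite ?length_app; simpl; lia.
Qed.

Lemma step_irrefl X t : ~ step X t X.
Proof. intro Hstep; apply step_keys_lt in Hstep; lia. Qed.

Lemma step_label_uniq X t X' t' : step X t X' -> step X t' X' -> t = t'.
Proof.
  intros Hstep; revert t'.
  induction Hstep; intros t0 Hstep0; inversion Hstep0; subst;
    try (exfalso; eapply step_irrefl; eassumption); f_equal; eauto.
  all: match goal with
       | HX : step _ _ _, HY : step _ _ _ |- _ =>
           apply IHHstep1 in HX; apply IHHstep2 in HY; congruence
       end.
Qed.

End Steps.

Arguments orig {N}.

Lemma is_hat_label_uniq N (t : ctrans N) h h' :
  is_hat t h -> is_hat t h' -> plab h = plab h'.
Proof.
  intros [Hstep [Hsrc [Htgt _]]] [Hstep' [Hsrc' [Htgt' _]]].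
  unfold is_ptrans in *; rewrite Hsrc, Htgt in Hstep; rewrite Hsrc', Htgt' in Hstep'.
  exact (step_label_uniq Hstep Hstep').
Qed.

Lemma ptrans_comparable N (t1 t2 : ptrans N) :
  is_ptrans t1 -> is_ptrans t2 -> pconnected t1 t2 ->
  comparable (plab t1) (plab t2).
Proof.
  intros H1 H2 Hconn; apply (step_comparable H1 H2).
  apply step_orig in H1; apply step_orig in H2.
  destruct Hconn as [P | P]; apply path_orig in P; congruence.
Qed.

Lemma ptrans_ind_xor_dep N (t1 t2 : ptrans N) :
  is_ptrans t1 -> is_ptrans t2 -> pconnected t1 t2 ->
  (ptrans_ind t1 t2 /\ ~ ptrans_dep t1 t2) \/
  (ptrans_dep t1 t2 /\ ~ ptrans_ind t1 t2).
Proof.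
  intros H1 H2 Hconn; unfold ptrans_ind, ptrans_dep.
  destruct (comparable_xor (ptrans_comparable H1 H2 Hconn)); tauto.
Qed.

Lemma cpath_path N (X Y : proc N) : cpath X Y -> path X Y.
Proof.
  induction 1 as [|? ? ? ? ? [? [? _]] | ? ? ? ? ? [? [? _]]];
    eauto using path.
Qed.

Lemma ctrans_hat N (t : ctrans N) : is_ctrans t -> exists h, is_hat t h.
Proof.
  intros [th [Hstep [Hell Hkey]]].
  exists (PT (csrc t) th (ctgt t)); repeat split; auto.
Qed.

Lemma hat_pconnected N (t1 t2 : ctrans N) h1 h2 :
  is_hat t1 h1 -> is_hat t2 h2 -> cconnected t1 t2 -> pconnected h1 h2.
Proof.
  intros [_ [Hs1 [Ht1 _]]] [_ [Hs2 [Ht2 _]]] Hconn; unfold pconnected.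
  rewrite Hs1, Ht1, Hs2, Ht2.
  destruct Hconn; [left | right]; apply cpath_path; assumption.
Qed.

Lemma hat_rel_iff N (R : plabel N -> plabel N -> Prop) (t1 t2 : ctrans N) h1 h2 :
  is_hat t1 h1 -> is_hat t2 h2 ->
  (exists g1 g2, is_hat t1 g1 /\ is_hat t2 g2 /\ R (plab g1) (plab g2)) <->
  R (plab h1) (plab h2).
Proof.
  intros Hh1 Hh2; split.
  - intros [g1 [g2 [Hg1 [Hg2 HR]]]].
    now rewrite (is_hat_label_uniq Hh1 Hg1), (is_hat_label_uniq Hh2 Hg2).
  - intro HR; exists h1, h2; auto.
Qed.

Lemma ctrans_ind_xor_dep N (t1 t2 : ctrans N) :
  is_ctrans t1 -> is_ctrans t2 -> cconnected t1 t2 ->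
  (ctrans_ind t1 t2 /\ ~ ctrans_dep t1 t2) \/
  (ctrans_dep t1 t2 /\ ~ ctrans_ind t1 t2).
Proof.
  intros H1 H2 Hconn.
  destruct (ctrans_hat H1) as [h1 Hh1], (ctrans_hat H2) as [h2 Hh2].
  assert (Hcmp : comparable (plab h1) (plab h2)).
  { apply ptrans_comparable; [apply Hh1 | apply Hh2 |].
    exact (hat_pconnected Hh1 Hh2 Hconn). }
  unfold ctrans_ind, ctrans_dep.
  rewrite (hat_rel_iff (@ind N) Hh1 Hh2), (hat_rel_iff (@dep N) Hh1 Hh2).
  destruct (comparable_xor Hcmp); tauto.
Qed.

Theorem proposition4p8 (N : Type) :
  (forall t1 t2 : ptrans N,
     is_ptrans t1 -> is_ptrans t2 ->
     reachable (psrc t1) -> reachable (psrc t2) ->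
     pconnected t1 t2 ->
     (ptrans_ind t1 t2 /\ ~ ptrans_dep t1 t2) \/
     (ptrans_dep t1 t2 /\ ~ ptrans_ind t1 t2)) /\
  (forall t1 t2 : ctrans N,
     is_ctrans t1 -> is_ctrans t2 ->
     creachable (csrc t1) -> creachable (csrc t2) ->
     cconnected t1 t2 ->
     (ctrans_ind t1 t2 /\ ~ ctrans_dep t1 t2) \/
     (ctrans_dep t1 t2 /\ ~ ctrans_ind t1 t2)).
Proof.
  split; intros t1 t2 H1 H2 _ _ Hconn.
  - exact (ptrans_ind_xor_dep H1 H2 Hconn).
  - exact (ctrans_ind_xor_dep H1 H2 Hconn).
Qed.
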